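(* Let $(m_i)_{i\ge0}$ and $(M_i)_{i\ge0}$ be sequences of positive integers such that $\rho_{m_i-1}\cdots\rho_1\cdot p^{M_i}\le1$ for all $i\ge0$ (the empty product being $1$). Suppose that for some $\lambda_0\in\Lambda$ there is $z_0\in K(Q_{\lambda_0},B)$ whose itinerary for $Q_{\lambda_0}$ is $$\underbrace{0\ldots0}_{m_0}\underbrace{1\ldots1}_{M_0}\underbrace{0\ldots0}_{m_1}\underbrace{1\ldots1}_{M_1}\ldots\underbrace{0\ldots0}_{m_i}\underbrace{1\ldots1}_{M_i}\ldots.$$ Then the closed ball $D=\{z:|z-z_0|\le S\}$ is contained in $K(Q_{\lambda_0},B)$. If moreover $\lim_{i\to\infty}M_i=\infty$, then $D$ is a wandering disc for $Q_{\lambda_0}$ contained in $K(Q_{\lambda_0},B)$ which is not attracted to an attracting cycle.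
   Context: Let $p$ be a prime, $\mathbb C_p$ with $p$-adic absolute value, $|p|=1/p$. $\Lambda=\{\lambda\in\mathbb C_p:|\lambda-1|<1\}$, $P_\lambda(z)=\frac{\lambda}{p}z^p+\left(1-\frac{\lambda}{p}\right)z^{p+1}$, $\rho=p^{-1/(p-1)}$; $S>0$ is defined by $pS^{p-1}=\rho$; $\rho_0=1$ and $p\rho_n^p=\rho_{n-1}$ for $n\ge1$. Fix $\hat r\in|\mathbb C_p^*|$, $\hat r>1$, $B=\{z:|z|\le\hat r\}$; $\mathcal H(B)$ is the ring of power series $\sum a_iz^i$ convergent on $B$ with norm $\|f\|_B=\sup_i|a_i|\hat r^{\,i}$. Fix $Q\in\mathcal H(B)$ with $\|Q\|_B<\rho$, $Q^*_\lambda=P_\lambda+Q$, and let $h(\lambda)$ be the unique fixed point of $Q^*_\lambda$ in $\{z:|z-1|\le|Q(1)|/p\}$. Define $Q_\lambda(z)=P_\lambda(z+h(\lambda)-1)+Q(z+h(\lambda)-1)+1-h(\lambda)$ for $z\in B$, and $K(Q_\lambda,B)=\{z\in B:Q_\lambda^n(z)\in B\ \forall n\ge0\}$. With $B_0=\{z:|z|<1\}$, $B_1=\{z:|z-1|<1\}$ (one has $K(Q_\lambda,B)\subset B_0\sqcup B_1$), the itinerary of $z\in K(Q_\lambda,B)$ is $\theta_0\theta_1\ldots$ with $Q_\lambda^n(z)\in B_{\theta_n}$. A wandering disc is a ball $D$ with $Q^n_\lambda(D)\cap Q^m_\lambda(D)\ne\emptyset$ only if $n=m$; ''not attracted to an attracting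 cycle'' means no point of $D$ lies in an open ball contained in the basin of an attracting periodic orbit. *)

From mathcomp Require Import all_boot all_order all_algebra.
From mathcomp Require Import all_classical all_reals all_analysis.
Set Implicit Arguments. Unset Strict Implicit. Unset Printing Implicit Defensive.
Import Order.TTheory GRing.Theory Num.Theory.
Local Open Scope ring_scope.

(* (K, abs) is a model of C_p: an algebraically closed field with a real-valued
   non-archimedean absolute value, complete, with |p| = 1/p, in which the
   elements algebraic over Q are dense.  These properties characterize C_p
   (completion of an algebraic closure of Q_p) up to isometric isomorphism. *)

Definition cvgK (R : realType) (K : fieldType) (abs : K -> R)
    (u : nat -> K) (l : K) : Prop :=
  forall eps : R, 0 < eps -> exists N : nat, forall n, (N <= n)%N -> abs (u n - l) < eps.

Definition cauchyK (R : realType) (K : fieldType) (abs : K -> R) (u : nat -> K) : Prop :=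
  forall eps : R, 0 < eps -> exists N : nat,
    forall n m, (N <= n)%N -> (N <= m)%N -> abs (u n - u m) < eps.

Record is_Cp (p : nat) (R : realType) (K : closedFieldType) (abs : K -> R) : Prop := {
  Cp_abs_ge0 : forall x, 0 <= abs x;
  Cp_abs_eq0 : forall x, (abs x == 0) = (x == 0);
  Cp_absM : forall x y, abs (x * y) = abs x * abs y;
  Cp_ultra : forall x y, abs (x + y) <= Num.max (abs x) (abs y);
  Cp_absp : abs (p%:R) = (p%:R)^-1;
  Cp_complete : forall u, cauchyK abs u -> exists l, cvgK abs u l;
  Cp_dense : forall (x : K) (eps : R), 0 < eps ->
    exists (y : K) (q : {poly int}), q != 0 /\ root (map_poly intr q) y /\ abs (x - y) < eps
}.

Definition rho (R : realType) (p : nat) : R := powR (p%:R) (- (p.-1%:R)^-1).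
(* S > 0 with p S^(p-1) = rho, i.e. S = (rho/p)^(1/(p-1)) *)
Definition Sconst (R : realType) (p : nat) : R := powR (rho R p / p%:R) ((p.-1%:R)^-1).
(* rho_0 = 1, p rho_n^p = rho_(n-1), i.e. rho_n = (rho_(n-1)/p)^(1/p) *)
Fixpoint rho_seq (R : realType) (p : nat) (n : nat) : R :=
  match n with
  | 0 => 1
  | n'.+1 => powR (rho_seq R p n' / p%:R) ((p%:R)^-1)
  end.

Definition psum (K : fieldType) (a : nat -> K) (z : K) : nat -> K :=
  fun n => \sum_(i < n) a i * z ^+ i.

Definition Plam (K : fieldType) (p : nat) (lam z : K) : K :=
  lam / p%:R * z ^+ p + (1 - lam / p%:R) * z ^+ p.+1.

Definition Qlam (K : fieldType) (p : nat) (lam h : K) (Qf : K -> K) (z : K) : K :=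
  Plam p lam (z + h - 1) + Qf (z + h - 1) + 1 - h.

Definition filledK (R : realType) (K : fieldType) (abs : K -> R) (r : R)
    (f : K -> K) (z : K) : Prop :=
  forall n : nat, abs (iter n f z) <= r.

(* Itinerary 0^{m_0} 1^{M_0} 0^{m_1} 1^{M_1} ... ; s_i = start of i-th block pair *)
Definition block_start (m M : nat -> nat) (i : nat) : nat := \sum_(j < i) (m j + M j).

Definition has_block_itinerary (R : realType) (K : fieldType) (abs : K -> R)
    (f : K -> K) (m M : nat -> nat) (z : K) : Prop :=
  forall i : nat,
    (forall k, (k < m i)%N -> abs (iter (block_start m M i + k) f z) < 1) /\
    (forall k, (k < M i)%N -> abs (iter (block_start m M i + m i + k) f z - 1) < 1).

Definition wandering (K : fieldType) (f : K -> K) (D : K -> Prop) : Prop :=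
  forall n m : nat, (exists x y, D x /\ D y /\ iter n f x = iter m f y) -> n = m.

Definition has_deriv (R : realType) (K : fieldType) (abs : K -> R)
    (g : K -> K) (w d : K) : Prop :=
  forall eps : R, 0 < eps -> exists del : R, 0 < del /\
    forall x, 0 < abs (x - w) < del -> abs ((g x - g w) / (x - w) - d) < eps.

Definition attracting_cycle (R : realType) (K : fieldType) (abs : K -> R) (r : R)
    (f : K -> K) (w : K) (k : nat) : Prop :=
  (0 < k)%N /\ filledK abs r f w /\ iter k f w = w /\
  exists d, has_deriv abs (iter k f) w d /\ abs d < 1.

Definition basin (R : realType) (K : fieldType) (abs : K -> R) (r : R)
    (f : K -> K) (w : K) (k : nat) (z : K) : Prop :=
  filledK abs r f z /\
  exists j, (j < k)%N /\ cvgK abs (fun n => iter (n * k) f z) (iter j f w).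

Definition not_attracted (R : realType) (K : fieldType) (abs : K -> R) (r : R)
    (f : K -> K) (D : K -> Prop) : Prop :=
  ~ exists (w : K) (k : nat) (c : K) (s : R),
      attracting_cycle abs r f w k /\ 0 < s /\
      (forall x, abs (x - c) < s -> basin abs r f w k x) /\
      (exists z, D z /\ abs (z - c) < s).

From mathcomp Require Import all_boot all_order all_algebra.
From mathcomp Require Import all_classical all_reals all_analysis.
From mathcomp Require Import ring lra zify.
Import Order.TTheory GRing.Theory Num.Theory.
Local Open Scope ring_scope.
Set Implicit Arguments. Unset Strict Implicit. Unset Printing Implicit Defensive.

(* Q_lambda is conjugate, by x |-> x + h - 1, to Q* = P_lambda + Q, and for
   |u| < 1 the term (lambda/p) u^p dominates Q*: |Q*(u)| = p |u|^p as soon as this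
   exceeds ||Q||_B.  Hence a point lying l steps before the end of a 0-block
   satisfies |u| <= rho_l, and there Q* multiplies distances up to S by at most
   max(|Q*(u)|, rho) <= rho_(l-1); on the closed unit disc it multiplies them by at
   most p.  Along a block 0^(m_i) 1^(M_i) the distance to the orbit of z0 therefore
   grows by at most rho_(m_i - 1) ... rho_1 p^(M_i) <= 1, so orbits starting in D
   shadow that of z0 and D lies in K(Q_lambda, B).  When M_i -> oo the itinerary
   of z0 has arbitrarily long runs of 1 right after a 0, so no orbit from D is
   eventually approximately periodic; a collision of two forward images of D, or
   convergence to an attracting cycle, would make one so. *)

Lemma lerXn2r_ge0 (R : numDomainType) (x y : R) n :
  0 <= x -> x <= y -> x ^+ n <= y ^+ n.
Proof. by move=> x0 xy; apply: lerXn2r; rewrite ?nnegrE // (le_trans x0 xy). Qed.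

Lemma mixed_pow_le (R : realDomainType) (x d C : R) a b : 0 <= x -> 0 <= d ->
  x ^+ (a + b) * d <= C -> d ^+ (a + b).+1 <= C -> x ^+ a * d ^+ b.+1 <= C.
Proof.
move=> x0 d0 hx hd; case: (lerP x d) => [xd|dx].
  apply: le_trans hd; rewrite -addnS exprD ler_wpM2r ?exprn_ge0 //.
  exact: lerXn2r_ge0.
apply: le_trans hx; rewrite exprD -mulrA ler_wpM2l ?exprn_ge0 // exprSr.
by rewrite ler_wpM2r // lerXn2r_ge0 // ltW.
Qed.

Lemma powR_invn_expr (R : realType) (a : R) n : 0 <= a -> (0 < n)%N ->
  (a `^ n%:R^-1) ^+ n = a.
Proof.
move=> a0 n0; rewrite -powR_mulrn ?powR_ge0 // -powRrM mulVf ?powRr1 //.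
by rewrite pnatr_eq0 -lt0n.
Qed.

Section Constants.
Variables (R : realType) (p : nat).
Hypothesis p_gt1 : (1 < p)%N.

Let p_gt0 : (0 < p)%N. Proof. exact: ltnW. Qed.
Let pred_p_gt0 : (0 < p.-1)%N. Proof. by rewrite -ltnS prednK. Qed.
Let pR_gt0 : (0 : R) < p%:R. Proof. by rewrite ltr0n. Qed.
Let pR_gt1 : (1 : R) < p%:R. Proof. by rewrite ltr1n. Qed.

Lemma rho_pow_pred : rho R p ^+ p.-1 = p%:R^-1.
Proof. by rewrite /rho powRN exprVn powR_invn_expr. Qed.

Lemma rho_gt0 : 0 < rho R p.
Proof. by rewrite /rho powR_gt0. Qed.

Lemma rho_lt1 : rho R p < 1.
Proof.
rewrite ltNge; apply/negP => rho_ge1.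
have : 1 <= rho R p ^+ p.-1 by rewrite exprn_ege1.
by rewrite rho_pow_pred invf_ge1 // leNgt pR_gt1.
Qed.

Lemma invp_le_rho : p%:R^-1 <= rho R p.
Proof.
rewrite -rho_pow_pred -[leRHS]expr1.
by apply: ler_wiXn2l; rewrite ?(ltW rho_gt0) ?(ltW rho_lt1).
Qed.

Lemma rho_pow : rho R p ^+ p = rho R p / p%:R.
Proof. by rewrite -{2}(prednK p_gt0) exprS rho_pow_pred. Qed.

Lemma Sconst_pow_pred : Sconst R p ^+ p.-1 = rho R p / p%:R.
Proof. by rewrite /Sconst powR_invn_expr // divr_ge0 // ltW // rho_gt0. Qed.

Lemma Sconst_gt0 : 0 < Sconst R p.
Proof. by rewrite /Sconst powR_gt0 // divr_gt0 // rho_gt0. Qed.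

Lemma Sconst_lt1 : Sconst R p < 1.
Proof.
rewrite ltNge; apply/negP => S_ge1.
have : 1 <= Sconst R p ^+ p.-1 by rewrite exprn_ege1.
rewrite Sconst_pow_pred ler_pdivlMr // mul1r.
by move: rho_lt1 pR_gt1; lra.
Qed.

Lemma rho_seq_ge0 j : 0 <= rho_seq R p j.
Proof. by case: j => [|j] /=; rewrite ?ler01 ?powR_ge0. Qed.

Lemma rho_seqS_pow j : rho_seq R p j.+1 ^+ p = rho_seq R p j / p%:R.
Proof. by rewrite /= powR_invn_expr // divr_ge0 ?rho_seq_ge0 // ltW. Qed.

Lemma rho_lt_rho_seq j : rho R p < rho_seq R p j.
Proof.
elim: j => [|j IHj]; first exact: rho_lt1.
rewrite ltNge; apply/negP => le_rho.
have := lerXn2r_ge0 p (rho_seq_ge0 j.+1) le_rho.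
by rewrite rho_seqS_pow rho_pow ler_pM2r ?invr_gt0 // leNgt IHj.
Qed.

Lemma rho_seq_le1 j : rho_seq R p j <= 1.
Proof.
elim: j => [|j IHj] //; rewrite leNgt; apply/negP => gt1.
have := ltrXn2r p ler01 gt1; rewrite rho_seqS_pow expr1n gtn_eqF //.
by rewrite ltr_pdivlMr // mul1r; move: IHj pR_gt1; lra.
Qed.

Lemma prod_rho_seq_ge0 a b : 0 <= \prod_(a <= j < b) rho_seq R p j.
Proof. by apply: prodr_ge0 => j _; exact: rho_seq_ge0. Qed.

Lemma prod_rho_seq_le1 a b : \prod_(a <= j < b) rho_seq R p j <= 1.
Proof. by apply: prodr_ile1 => j _; rewrite rho_seq_ge0 rho_seq_le1. Qed.

End Constants.

Lemma block_startS m M i : block_start m M i.+1 = (block_start m M i + m i + M i)%N.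
Proof. by rewrite /block_start big_ord_recr /= addnA. Qed.

Lemma block_start_ge m M i : (forall j, (0 < m j)%N) -> (i <= block_start m M i)%N.
Proof.
move=> m_gt0; elim: i => [|i IHi] //.
by rewrite block_startS; have := m_gt0 i; lia.
Qed.

Lemma block_start_cover m M n : (forall j, (0 < m j)%N) ->
  exists i, (block_start m M i <= n < block_start m M i.+1)%N.
Proof.
move=> m_gt0; elim: n => [|n [i /andP[ge_n lt_n]]].
  by exists 0%N; rewrite block_startS /block_start big_ord0; have := m_gt0 0%N; lia.
case: (ltnP n.+1 (block_start m M i.+1)) => [lt_Sn|ge_Sn].
  by exists i; rewrite lt_Sn andbT; lia.
by exists i.+1; rewrite ge_Sn /= block_startS; have := m_gt0 i.+1; lia.
Qed.

Lemma subrX_binomial (T : comNzRingType) (u v : T) n :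
  v ^+ n - u ^+ n = \sum_(i < n) u ^+ (n - i.+1) * (v - u) ^+ i.+1 *+ 'C(n, i.+1).
Proof.
rewrite -{1}(subrK u v) (addrC (v - u) u) exprDn big_ord_recl /= subn0 expr0 mulr1 bin0 mulr1n.
by rewrite addrAC subrr add0r.
Qed.

Definition Qstar (K : fieldType) (p : nat) (lam : K) (Qf : K -> K) (u : K) : K :=
  Plam p lam u + Qf u.

Lemma Qlam_recentre (K : fieldType) p (lam h : K) Qf x :
  Qlam p lam h Qf x + h - 1 = Qstar p lam Qf (x + h - 1).
Proof. by rewrite /Qlam /Qstar; ring. Qed.

Lemma Qlam_sub (K : fieldType) p (lam h : K) Qf x y :
  Qlam p lam h Qf y - Qlam p lam h Qf x =
  Qstar p lam Qf (y + h - 1) - Qstar p lam Qf (x + h - 1).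
Proof. by rewrite -!Qlam_recentre; ring. Qed.

Section Ultrametric.
Variables (p : nat) (R : realType) (K : closedFieldType) (abs : K -> R).
Hypothesis Hp : is_Cp p abs.

Lemma abs_ge0 x : 0 <= abs x.
Proof. exact: Cp_abs_ge0 Hp x. Qed.

Lemma abs0 : abs 0 = 0.
Proof. by apply/eqP; rewrite (Cp_abs_eq0 Hp). Qed.

Lemma abs1 : abs 1 = 1.
Proof.
have abs1_neq0 : abs 1 != 0 by rewrite (Cp_abs_eq0 Hp) oner_eq0.
by apply: (mulfI abs1_neq0); rewrite -(Cp_absM Hp) !mulr1.
Qed.

Lemma absM x y : abs (x * y) = abs x * abs y.
Proof. exact: Cp_absM Hp x y. Qed.

Lemma absN x : abs (- x) = abs x.
Proof.
have absN1 : abs (-1) = 1.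
  have := absM (-1) (-1); rewrite mulrNN mulr1 abs1.
  by have := abs_ge0 (-1); nra.
by rewrite -mulN1r absM absN1 mul1r.
Qed.

Lemma absB x y : abs (x - y) = abs (y - x).
Proof. by rewrite -absN opprB. Qed.

Lemma absX x n : abs (x ^+ n) = abs x ^+ n.
Proof. by elim: n => [|n IHn]; rewrite ?abs1 // !exprS absM IHn. Qed.

Lemma absV x : x != 0 -> abs x^-1 = (abs x)^-1.
Proof.
move=> x_neq0; have absx_neq0 : abs x != 0 by rewrite (Cp_abs_eq0 Hp).
by apply: (mulIf absx_neq0); rewrite -absM mulVf // mulVf // abs1.
Qed.

Lemma abs_add_le x y (B : R) : abs x <= B -> abs y <= B -> abs (x + y) <= B.
Proof. by move=> hx hy; apply: le_trans (Cp_ultra Hp x y) _; rewrite ge_max hx. Qed.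

Lemma abs_add_lt x y (B : R) : abs x < B -> abs y < B -> abs (x + y) < B.
Proof. by move=> hx hy; apply: le_lt_trans (Cp_ultra Hp x y) _; rewrite gt_max hx. Qed.

Lemma abs_sub_lt_trans x y z (B : R) : abs (x - y) < B -> abs (y - z) < B -> abs (x - z) < B.
Proof. by move=> hxy hyz; rewrite -[x - z](subrKA y) addrC; exact: abs_add_lt. Qed.

Lemma abs_addr_eq x y : abs y < abs x -> abs (x + y) = abs x.
Proof.
move=> lt_yx; apply/eqP; rewrite eq_le (abs_add_le (lexx _) (ltW lt_yx)) /=.
have := Cp_ultra Hp (x + y) (- y); rewrite addrK absN le_max.
case/orP=> [-> //|le_xy]; by have := le_lt_trans le_xy lt_yx; rewrite ltxx.
Qed.

Lemma abs_natr_le1 n : abs (n%:R : K) <= 1.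
Proof. by elim: n => [|n IHn]; rewrite ?abs0 // -addn1 natrD abs_add_le ?abs1. Qed.

Lemma abs_mulrn_le x n : abs (x *+ n) <= abs x.
Proof. by rewrite -mulr_natr absM ler_piMr ?abs_ge0 ?abs_natr_le1. Qed.

Lemma abs_mulrn_dvd_le x n : (p %| n)%N -> abs (x *+ n) <= abs x / p%:R.
Proof.
move=> /divnK <-; rewrite -[x *+ _]mulr_natr natrM mulrA !absM (Cp_absp Hp) ler_wpM2r //.
by rewrite ler_piMr ?abs_ge0 ?abs_natr_le1.
Qed.

Lemma abs_sum_le n (F : 'I_n -> K) (B : R) : 0 <= B ->
  (forall i, abs (F i) <= B) -> abs (\sum_(i < n) F i) <= B.
Proof.
move=> B_ge0 F_le; apply: (big_ind (fun x => abs x <= B)) => //; first by rewrite abs0.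
by move=> x y; apply: abs_add_le.
Qed.

Lemma cvgK_abs_le (u : nat -> K) l (B : R) : cvgK abs u l ->
  (forall n, abs (u n) <= B) -> abs l <= B.
Proof.
move=> u_l u_le; rewrite leNgt; apply/negP => lt_Bl.
have B_ge0 : 0 <= B := le_trans (abs_ge0 _) (u_le 0%N).
have Bl_gt0 : 0 < abs l - B by rewrite subr_gt0.
have [N uN_l] := u_l _ Bl_gt0.
have : abs (u N - (u N - l)) < abs l.
  rewrite abs_add_lt ?absN ?(le_lt_trans (u_le N)) //.
  by apply: lt_le_trans (uN_l N (leqnn N)) _; rewrite gerBl.
by rewrite subKr ltxx.
Qed.

Lemma cvgK_sub (u v : nat -> K) l l' : cvgK abs u l -> cvgK abs v l' ->
  cvgK abs (fun n => u n - v n) (l - l').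
Proof.
move=> u_l v_l' e e_gt0; have [N1 hN1] := u_l e e_gt0; have [N2 hN2] := v_l' e e_gt0.
exists (maxn N1 N2) => n; rewrite geq_max => /andP[le1 le2].
have -> : u n - v n - (l - l') = (u n - l) + - (v n - l') by ring.
by rewrite abs_add_lt ?absN ?hN1 ?hN2.
Qed.

Lemma cvgK_step_lt (u : nat -> K) l (e : R) : cvgK abs u l -> 0 < e ->
  exists N, forall n, (N <= n)%N -> abs (u n - u n.+1) < e.
Proof.
move=> u_l e_gt0; have [N hN] := u_l e e_gt0; exists N => n le_Nn.
by apply: (@abs_sub_lt_trans _ l); rewrite ?hN // absB hN // leqW.
Qed.

Lemma abs_subX_le u v n (B : R) :
  abs u ^+ n.-1 * abs (v - u) <= B -> abs (v - u) ^+ n <= B ->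
  abs (v ^+ n - u ^+ n) <= B.
Proof.
move=> le_lin le_top; have B_ge0 := le_trans (exprn_ge0 _ (abs_ge0 _)) le_top.
rewrite subrX_binomial abs_sum_le // => i; have lt_in := ltn_ord i.
apply: le_trans (abs_mulrn_le _ _) _.
have n_eq : (n - i.+1 + i = n.-1)%N by lia.
by rewrite absM !absX mixed_pow_le ?abs_ge0 // n_eq // prednK // (leq_ltn_trans _ lt_in).
Qed.

Lemma natr_p_neq0 : (0 < p)%N -> (p%:R : K) != 0.
Proof.
move=> p_gt0; apply/negP => /eqP p_eq0; move: (Cp_absp Hp).
by rewrite p_eq0 abs0 => /esym/eqP; rewrite invr_eq0 pnatr_eq0 gtn_eqF.
Qed.

Lemma abs_subXp_le u v (B : R) : prime p ->
  abs u ^+ p.-1 * abs (v - u) <= B -> p%:R * abs (v - u) ^+ p <= B ->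
  abs (v ^+ p - u ^+ p) <= B / p%:R.
Proof.
move=> p_prime le_lin le_top; have p_gt1 := prime_gt1 p_prime.
have pR_gt0 : (0 : R) < p%:R by rewrite ltr0n (ltnW p_gt1).
have top_le : abs (v - u) ^+ p <= B / p%:R by rewrite ler_pdivlMr // mulrC.
have B_ge0 : 0 <= B.
  by apply: le_trans le_top; rewrite mulr_ge0 ?ler0n ?exprn_ge0 ?abs_ge0.
have Bp_ge0 : 0 <= B / p%:R by rewrite divr_ge0 // ltW.
rewrite subrX_binomial abs_sum_le // => i; have lt_ip := ltn_ord i.
case: (ltnP i.+1 p) => [lt_Sip|le_pSi].
  have dvd_bin : (p %| 'C(p, i.+1))%N by rewrite prime_dvd_bin ?lt_Sip.
  apply: le_trans (abs_mulrn_dvd_le _ dvd_bin) _.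
  have p_eq : (p - i.+1 + i = p.-1)%N by lia.
  rewrite ler_pM2r ?invr_gt0 // absM !absX; apply: mixed_pow_le; rewrite ?abs_ge0 ?p_eq //.
  rewrite (prednK (ltnW p_gt1)); apply: le_trans le_top.
  by rewrite ler_peMl ?exprn_ge0 ?abs_ge0 // ler1n (ltnW p_gt1).
have -> : i.+1 = p by apply/eqP; rewrite eqn_leq lt_ip le_pSi.
by apply: le_trans (abs_mulrn_le _ _) _; rewrite subnn expr0 mul1r absX.
Qed.

Lemma abs_eq1_of_near1 x : abs (x - 1) < 1 -> abs x = 1.
Proof. by move=> near1; rewrite -(subrK 1 x) addrC abs_addr_eq abs1. Qed.

Lemma abs_lam_divp lam : (0 < p)%N -> abs (lam - 1) < 1 -> abs (lam / p%:R) = p%:R.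
Proof.
move=> p_gt0 /abs_eq1_of_near1 abs_lam.
by rewrite absM abs_lam mul1r absV ?natr_p_neq0 // (Cp_absp Hp) invrK.
Qed.

Lemma abs_1_sub_lam_divp lam : (1 < p)%N -> abs (lam - 1) < 1 ->
  abs (1 - lam / p%:R) = p%:R.
Proof.
move=> p_gt1 near1; rewrite addrC abs_addr_eq absN abs_lam_divp ?(ltnW p_gt1) //.
by rewrite abs1 ltr1n.
Qed.

Section Recentre.
Variable h : K.
Hypothesis h_near1 : abs (h - 1) < 1.

Lemma abs_recentre_lt1 x : abs x < 1 -> abs (x + h - 1) < 1.
Proof. by move=> x_lt1; rewrite -addrA abs_add_lt. Qed.

Lemma abs_recentre_le1 x : abs (x - 1) < 1 -> abs (x + h - 1) <= 1.
Proof.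
move=> near1; have -> : x + h - 1 = 1 + ((x - 1) + (h - 1)) by ring.
by rewrite abs_add_le ?abs1 // ltW // abs_add_lt.
Qed.

End Recentre.

Lemma block_itinerary_no_approx_period (f : K -> K) m M z d n0 :
  (forall i, (0 < m i)%N) -> (forall N, exists i0, forall i, (i0 <= i)%N -> (N <= M i)%N) ->
  has_block_itinerary abs f m M z -> (0 < d)%N ->
  ~ (forall t, (n0 <= t)%N -> abs (iter t f z - iter (t + d) f z) < 1).
Proof.
move=> m_gt0 M_unbounded itin d_gt0 approx.
have [i0 hi0] := M_unbounded d; set i := maxn i0 n0.+1.
have le_dM : (d <= M i)%N by apply: hi0; exact: leq_maxl.
have lt_n0 : (n0 < block_start m M i)%N.
  by apply: leq_trans (block_start_ge M i m_gt0); exact: leq_maxr.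
have [in0 in1] := itin i; have := m_gt0 i => mi_gt0.
set s := (block_start m M i + (m i).-1)%N.
have x_lt1 : abs (iter s f z) < 1 by apply: in0; rewrite prednK.
have y_near1 : abs (iter (s + d) f z - 1) < 1.
  have -> : (s + d = block_start m M i + m i + d.-1)%N by rewrite /s; lia.
  by apply: in1; rewrite prednK.
have y_lt1 : abs (iter (s + d) f z) < 1.
  rewrite -(subrK (iter s f z) (iter (s + d) f z)) abs_add_lt // absB approx //.
  by rewrite /s; lia.
by move: y_lt1; rewrite (abs_eq1_of_near1 y_near1) ltxx.
Qed.

Section PowerSeries.
Variables (a : nat -> K) (Qf : K -> K) (rhat c : R).
Hypothesis rhat_ge1 : 1 <= rhat.
Hypothesis Qf_sum : forall z, abs z <= rhat -> cvgK abs (psum a z) (Qf z).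
Hypothesis coef_le : forall i, abs (a i) * rhat ^+ i <= c.

Lemma coef_bound_ge0 : 0 <= c.
Proof. by apply: le_trans (coef_le 0); rewrite expr0 mulr1 abs_ge0. Qed.

Lemma abs_Qf_le z : abs z <= rhat -> abs (Qf z) <= c.
Proof.
move=> z_le; apply: cvgK_abs_le (Qf_sum z_le) _ => n.
rewrite abs_sum_le ?coef_bound_ge0 // => i; apply: le_trans (coef_le i).
by rewrite absM absX ler_wpM2l ?abs_ge0 ?lerXn2r_ge0 ?abs_ge0.
Qed.

Lemma abs_Qf_sub_le u v : abs u <= rhat -> abs v <= rhat ->
  abs (Qf v - Qf u) <= c * abs (v - u).
Proof.
move=> u_le v_le; set e := abs (v - u).
have e_ge0 : 0 <= e := abs_ge0 _.
have e_le : e <= rhat by rewrite abs_add_le ?absN.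
apply: cvgK_abs_le (cvgK_sub (Qf_sum v_le) (Qf_sum u_le)) _ => n.
rewrite /psum -sumrB abs_sum_le ?mulr_ge0 ?coef_bound_ge0 // => -[[|i] _] /=.
  by rewrite !expr0 subrr abs0 mulr_ge0 ?coef_bound_ge0.
have rhat_ge0 : 0 <= rhat ^+ i by rewrite exprn_ge0 // (le_trans ler01).
have powdiff : abs (v ^+ i.+1 - u ^+ i.+1) <= e * rhat ^+ i.
  apply: abs_subX_le => /=; first by rewrite mulrC ler_wpM2l // lerXn2r_ge0 ?abs_ge0.
  by rewrite exprS ler_wpM2l // lerXn2r_ge0.
rewrite -mulrBr absM (le_trans (ler_wpM2l (abs_ge0 _) powdiff)) // mulrCA mulrC.
rewrite ler_wpM2r //; apply: le_trans (coef_le i.+1).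
by rewrite exprS mulrCA ler_peMl ?mulr_ge0 ?abs_ge0.
Qed.

Section Map.
Variable lam : K.
Hypothesis c_lt_rho : c < rho R p.
Hypothesis p_prime : prime p.
Hypothesis lam_near1 : abs (lam - 1) < 1.

Local Notation g := (Qstar p lam Qf).
Let p_gt1 : (1 < p)%N := prime_gt1 p_prime.
Let pR_gt0 : (0 : R) < p%:R. Proof. by rewrite ltr0n (ltnW p_gt1). Qed.
Let pR_ge1 : (1 : R) <= p%:R. Proof. by rewrite ler1n (ltnW p_gt1). Qed.
Let c_ge0 : 0 <= c := coef_bound_ge0.
Let c_le1 : c <= 1. Proof. exact: ltW (lt_trans c_lt_rho (rho_lt1 R p_gt1)). Qed.

Lemma abs_sub1_lt1 h : abs (h - 1) <= abs (Qf 1) / p%:R -> abs (h - 1) < 1.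
Proof.
move=> h_le; apply: le_lt_trans h_le _; rewrite ltr_pdivrMr // mul1r.
apply: le_lt_trans (abs_Qf_le _) _; first by rewrite abs1.
exact: lt_le_trans (lt_trans c_lt_rho (rho_lt1 R p_gt1)) pR_ge1.
Qed.

(* The binomial expansions of v^p - u^p and v^(p+1) - u^(p+1) are dominated by
   their linear and top terms (mixed_pow_le); the hypotheses bound these, weighted
   by |lam/p| = |1 - lam/p| = p, and the increment of Q. *)
Lemma Qstar_sub_le u v (B : R) : abs u <= 1 -> abs (v - u) <= 1 ->
  abs u ^+ p.-1 * abs (v - u) <= B -> p%:R * abs u ^+ p * abs (v - u) <= B ->
  p%:R * abs (v - u) ^+ p <= B -> c * abs (v - u) <= B ->
  abs (g v - g u) <= B.
Proof.
move=> u_le1 d_le1 le_lin le_mid le_top le_Q.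
set e := abs (v - u) in d_le1 le_lin le_mid le_top le_Q.
have v_le1 : abs v <= 1 by rewrite -(subrK u v) abs_add_le.
have -> : g v - g u = lam / p%:R * (v ^+ p - u ^+ p) +
    ((1 - lam / p%:R) * (v ^+ p.+1 - u ^+ p.+1) + (Qf v - Qf u)).
  by rewrite /Qstar /Plam; ring.
apply: abs_add_le; last apply: abs_add_le.
- rewrite absM abs_lam_divp ?(ltnW p_gt1) // mulrC -ler_pdivlMr //.
  exact: abs_subXp_le.
- rewrite absM abs_1_sub_lam_divp // mulrC -ler_pdivlMr //.
  apply: abs_subX_le => /=; first by rewrite ler_pdivlMr // mulrC mulrA.
  have e_ge0 : 0 <= e := abs_ge0 _.
  apply: le_trans (_ : e ^+ p <= _); first by rewrite exprS ler_piMl ?exprn_ge0.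
  by rewrite ler_pdivlMr // mulrC.
- apply: le_trans le_Q.
  by apply: abs_Qf_sub_le; apply: le_trans rhat_ge1.
Qed.

Lemma Qstar_sub_le_p u v : abs u <= 1 -> abs (v - u) <= 1 ->
  abs (g v - g u) <= p%:R * abs (v - u).
Proof.
move=> u_le1 d_le1; have u_ge0 := abs_ge0 u; have d_ge0 := abs_ge0 (v - u).
have up_le1 n : abs u ^+ n <= 1 by rewrite exprn_ile1.
apply: Qstar_sub_le => //.
- by rewrite ler_wpM2r // (le_trans (up_le1 _)).
- by rewrite -mulrA ler_wpM2l ?ler0n // ler_piMl.
- by rewrite ler_wpM2l ?ler0n // ler_iXnr // prime_gt0.
- by rewrite ler_wpM2r // (le_trans c_le1).
Qed.

Lemma abs_Qstar_eq u : abs u < 1 -> c < p%:R * abs u ^+ p ->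
  abs (g u) = p%:R * abs u ^+ p.
Proof.
move=> u_lt1 c_lt.
have up_gt0 : 0 < abs u ^+ p.
  by rewrite -(pmulr_rgt0 _ pR_gt0) (le_lt_trans c_ge0).
have -> : g u = lam / p%:R * u ^+ p + ((1 - lam / p%:R) * u ^+ p.+1 + Qf u).
  by rewrite /Qstar /Plam; ring.
have lead : abs (lam / p%:R * u ^+ p) = p%:R * abs u ^+ p.
  by rewrite absM abs_lam_divp ?(ltnW p_gt1) // absX.
rewrite abs_addr_eq lead //; apply: abs_add_lt.
  by rewrite absM abs_1_sub_lam_divp // absX ltr_pM2l // exprS gtr_pMl.
by apply: le_lt_trans c_lt; apply: abs_Qf_le; rewrite (le_trans (ltW u_lt1)).
Qed.

Lemma Qstar_sub_le_max u v : abs u < 1 -> abs (v - u) <= Sconst R p ->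
  abs (g v - g u) <= Num.max (abs (g u)) (rho R p) * abs (v - u).
Proof.
move=> u_lt1 d_le; set F := Num.max _ _.
have u_ge0 := abs_ge0 u; have d_ge0 := abs_ge0 (v - u).
have rho_le : rho R p <= F by rewrite le_max lexx orbT.
have c_le : c <= F := le_trans (ltW c_lt_rho) rho_le.
have lead_le : p%:R * abs u ^+ p <= F.
  case: (ltP c (p%:R * abs u ^+ p)) => [c_lt|]; last by move/le_trans; apply.
  by rewrite -abs_Qstar_eq // le_max lexx.
have up_pred_le : abs u ^+ p.-1 <= F.
  case: (lerP 1 (p%:R * abs u)) => [pu_ge1|pu_lt1].
    apply: le_trans lead_le.
    have -> : abs u ^+ p = abs u * abs u ^+ p.-1 by rewrite -exprS prednK ?prime_gt0.
    by rewrite mulrA ler_peMl ?exprn_ge0.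
  have u_le : abs u <= p%:R^-1 by rewrite -(ler_pM2l pR_gt0) mulfV ?gt_eqF // ltW.
  apply: le_trans (le_trans _ (invp_le_rho R p_gt1)) rho_le.
  apply: le_trans (lerXn2r_ge0 _ u_ge0 u_le) _.
  by rewrite ler_iXnr ?invr_ge0 ?ler0n ?invf_le1 // -ltnS prednK ?prime_gt0.
have top_le : p%:R * abs (v - u) ^+ p.-1 <= F.
  apply: le_trans rho_le; rewrite mulrC -ler_pdivlMr //.
  by rewrite -(Sconst_pow_pred R p_gt1) lerXn2r_ge0.
apply: Qstar_sub_le; rewrite ?ler_wpM2r // ?(ltW u_lt1) //.
- exact: le_trans d_le (ltW (Sconst_lt1 R p_gt1)).
- by rewrite -{2}(prednK (prime_gt0 p_prime)) exprSr mulrA ler_wpM2r.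
Qed.

Lemma abs_Qstar_preimage_le u l : abs u < 1 -> abs (g u) <= rho_seq R p l ->
  abs u <= rho_seq R p l.+1.
Proof.
move=> u_lt1 gu_le; rewrite leNgt; apply/negP => lt_u.
have lead_gt : rho_seq R p l < p%:R * abs u ^+ p.
  have -> : rho_seq R p l = p%:R * rho_seq R p l.+1 ^+ p.
    by rewrite rho_seqS_pow // mulrC divfK // gt_eqF.
  by rewrite ltr_pM2l // ltrXn2r ?rho_seq_ge0 // gtn_eqF // prime_gt0.
have c_lt : c < p%:R * abs u ^+ p.
  exact: lt_trans (lt_trans c_lt_rho (rho_lt_rho_seq R p_gt1 l)) lead_gt.
by move: gu_le; rewrite abs_Qstar_eq // leNgt lead_gt.
Qed.

Section Orbits.
Variable h : K.
Hypothesis h_near1 : abs (h - 1) < 1.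

Local Notation f := (Qlam p lam h Qf).
Local Notation S := (Sconst R p).

Lemma Qlam_sub_le_p x y : abs (x + h - 1) <= 1 -> abs (y - x) <= 1 ->
  abs (f y - f x) <= p%:R * abs (y - x).
Proof.
move=> x_le1 d_le1; have shift : (y + h - 1) - (x + h - 1) = y - x by ring.
by rewrite Qlam_sub -shift Qstar_sub_le_p // shift.
Qed.

Lemma iter_Qlam_sub_le_p x y r :
  (forall s, (s < r)%N -> abs (iter s f x + h - 1) <= 1) ->
  p%:R ^+ r * abs (y - x) <= 1 ->
  abs (iter r f y - iter r f x) <= p%:R ^+ r * abs (y - x).
Proof.
elim: r => [|r IHr] orbit_le1 small; first by rewrite expr0 mul1r.
have grow : p%:R ^+ r * abs (y - x) <= p%:R ^+ r.+1 * abs (y - x).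
  by rewrite ler_wpM2r ?abs_ge0 // ler_weXn2l.
have prev : abs (iter r f y - iter r f x) <= p%:R ^+ r * abs (y - x).
  by apply: IHr (le_trans grow small) => s lt_sr; apply: orbit_le1; exact: ltnW.
rewrite !iterS; apply: le_trans (Qlam_sub_le_p (orbit_le1 r (ltnSn r)) _) _.
  exact: le_trans prev (le_trans grow small).
by rewrite exprS -mulrA ler_wpM2l ?ler0n.
Qed.

Lemma Qlam_sub_le_max x y : abs (x + h - 1) < 1 -> abs (y - x) <= S ->
  abs (f y - f x) <= Num.max (abs (f x + h - 1)) (rho R p) * abs (y - x).
Proof.
move=> x_lt1 d_le; have shift : (y + h - 1) - (x + h - 1) = y - x by ring.
by rewrite Qlam_sub Qlam_recentre -shift Qstar_sub_le_max // shift.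
Qed.

Lemma Qlam_preimage_le x l : abs (x + h - 1) < 1 ->
  abs (f x + h - 1) <= rho_seq R p l -> abs (x + h - 1) <= rho_seq R p l.+1.
Proof. by rewrite Qlam_recentre; exact: abs_Qstar_preimage_le. Qed.


Section Itinerary.
Variables (m M : nat -> nat) (z0 : K).
Hypothesis m_gt0 : forall i, (0 < m i)%N.
Hypothesis M_gt0 : forall i, (0 < M i)%N.
Hypothesis block_prod_le1 :
  forall i, (\prod_(1 <= j < m i) rho_seq R p j) * p%:R ^+ M i <= 1.
Hypothesis itin : has_block_itinerary abs f m M z0.

Local Notation t := (block_start m M).
Let S_lt1 : S < 1 := Sconst_lt1 R p_gt1.
Let S_gt0 : 0 < S := Sconst_gt0 R p_gt1.

Lemma zero_block_depth i l : (l <= m i)%N ->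
  abs (iter (t i + (m i - l)) f z0 + h - 1) <= rho_seq R p l.
Proof.
elim: l => [|l IHl] le_lm.
  by rewrite subn0; apply: abs_recentre_le1; have := (itin i).2 0%N (M_gt0 i); rewrite addn0.
apply: Qlam_preimage_le.
  by apply: abs_recentre_lt1 => //; apply: (itin i).1; rewrite ltn_subrL m_gt0.
by rewrite -iterS -addnS subnSK // IHl // ltnW.
Qed.

Lemma zero_block_shadow i z : abs (iter (t i) f z - iter (t i) f z0) <= S ->
  forall k, (k <= m i)%N -> abs (iter (t i + k) f z - iter (t i + k) f z0)
    <= S * \prod_(m i - k <= j < m i) rho_seq R p j.
Proof.
move=> start; elim=> [|k IHk] le_km; first by rewrite addn0 subn0 big_geq // mulr1.
have prev := IHk (ltnW le_km).
have d_le : abs (iter (t i + k) f z - iter (t i + k) f z0) <= S.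
  by apply: le_trans prev _; rewrite ler_piMr ?(ltW S_gt0) ?prod_rho_seq_le1.
have x_lt1 := abs_recentre_lt1 h_near1 ((itin i).1 k le_km).
rewrite addnS !iterS; apply: le_trans (Qlam_sub_le_max x_lt1 d_le) _.
rewrite big_ltn ?ltn_subrL ?m_gt0 // subnSK // mulrCA.
rewrite ler_pM ?abs_ge0 ?le_max ?(ltW (rho_gt0 R p_gt1)) ?orbT //.
rewrite ge_max (ltW (rho_lt_rho_seq R p_gt1 _)) andbT -iterS -addnS.
by rewrite -{1}(subKn le_km) zero_block_depth ?leq_subr.
Qed.

Lemma one_block_factor_le i k : (k <= M i)%N ->
  (\prod_(1 <= j < m i) rho_seq R p j) * p%:R ^+ k <= 1.
Proof.
move=> le_kM; apply: le_trans (block_prod_le1 i).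
by rewrite ler_wpM2l ?prod_rho_seq_ge0 // ler_weXn2l // ler1n ltnW.
Qed.

Lemma one_block_shadow i z : abs (iter (t i) f z - iter (t i) f z0) <= S ->
  forall k, (k <= M i)%N -> abs (iter (t i + m i + k) f z - iter (t i + m i + k) f z0)
    <= S * ((\prod_(1 <= j < m i) rho_seq R p j) * p%:R ^+ k).
Proof.
move=> start; set P := \prod_(1 <= j < m i) _; elim=> [|k IHk] le_kM.
  have := zero_block_shadow start (leqnn (m i)).
  by rewrite addn0 expr0 mulr1 subnn big_ltn ?m_gt0 //= mul1r.
have prev := IHk (ltnW le_kM).
have x_le1 := abs_recentre_le1 h_near1 ((itin i).2 k le_kM).
rewrite addnS !iterS; apply: le_trans (Qlam_sub_le_p x_le1 _) _.
  apply: le_trans prev (le_trans _ (ltW S_lt1)).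
  by rewrite ler_piMr ?(ltW S_gt0) ?one_block_factor_le ?(ltnW le_kM).
apply: le_trans (ler_wpM2l (ler0n _ _) prev) _.
by rewrite exprS [in leRHS](mulrCA P) [leRHS]mulrCA.
Qed.

Lemma block_shadow i z : abs (iter (t i) f z - iter (t i) f z0) <= S ->
  forall k, (k <= m i + M i)%N -> abs (iter (t i + k) f z - iter (t i + k) f z0) <= S.
Proof.
move=> start k le_k; case: (leqP k (m i)) => [le_km|lt_mk].
  apply: le_trans (zero_block_shadow start le_km) _.
  by rewrite ler_piMr ?(ltW S_gt0) ?prod_rho_seq_le1.
rewrite -(subnKC (ltnW lt_mk)) addnA; apply: le_trans (one_block_shadow start _) _.
  by rewrite leq_subLR.
by rewrite ler_piMr ?(ltW S_gt0) ?one_block_factor_le // leq_subLR.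
Qed.

Lemma orbit_shadow z : abs (z - z0) <= S ->
  forall n, abs (iter n f z - iter n f z0) <= S.
Proof.
move=> z_near.
have at_start i : abs (iter (t i) f z - iter (t i) f z0) <= S.
  elim: i => [|i IHi]; first by rewrite /block_start big_ord0.
  by rewrite block_startS -addnA block_shadow.
move=> n; have [i /andP[ge_n lt_n]] := block_start_cover M n m_gt0.
by rewrite -(subnKC ge_n) block_shadow // leq_subLR addnA ltnW // -block_startS.
Qed.

Lemma orbit_recentre_le1 n : abs (iter n f z0 + h - 1) <= 1.
Proof.
have [i /andP[ge_n lt_n]] := block_start_cover M n m_gt0.
rewrite -(subnKC ge_n); case: (ltnP (n - t i) (m i)) => [in_zero|in_one].
  exact/ltW/abs_recentre_lt1/(itin i).1.
rewrite -(subnKC in_one) addnA; apply/abs_recentre_le1/(itin i).2 => //.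
by rewrite ltn_subLR // ltn_subLR // addnA -block_startS.
Qed.

Lemma disc_orbit_recentre_le1 z n : abs (z - z0) <= S -> abs (iter n f z + h - 1) <= 1.
Proof.
move=> z_near; have -> : iter n f z + h - 1 =
    (iter n f z0 + h - 1) + (iter n f z - iter n f z0) by ring.
by rewrite abs_add_le ?orbit_recentre_le1 ?(le_trans (orbit_shadow z_near n)) ?ltW.
Qed.

Lemma disc_filled : filledK abs rhat f z0 ->
  forall z, abs (z - z0) <= S -> filledK abs rhat f z.
Proof.
move=> z0_filled z z_near n; rewrite -(subrK (iter n f z0) (iter n f z)).
rewrite abs_add_le ?z0_filled //; apply: le_trans (orbit_shadow z_near n) _.
exact: le_trans (ltW S_lt1) rhat_ge1.
Qed.

Lemma basin_approx_period z k l : abs (z - z0) <= S -> (0 < k)%N ->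
  cvgK abs (fun n => iter (n * k) f z) l ->
  exists n0, forall s, (n0 <= s)%N -> abs (iter s f z - iter (s + k) f z) < 1.
Proof.
move=> z_near k_gt0 conv; set eps := (p%:R ^+ k)^-1 : R.
have eps_gt0 : 0 < eps by rewrite invr_gt0 exprn_gt0.
have [N close] := cvgK_step_lt conv eps_gt0.
exists (N * k)%N => s le_s; set q := (s %/ k)%N; set r := (s %% k)%N.
set x := iter (q * k) f z; set y := iter (q.+1 * k) f z.
have d_lt : abs (y - x) < eps by rewrite absB close // leq_divRL.
have pr_gt0 : (0 : R) < p%:R ^+ r by rewrite exprn_gt0.
have pr_eps_le1 : p%:R ^+ r * eps <= 1.
  rewrite ler_pdivrMr ?exprn_gt0 // mul1r ler_weXn2l ?ler1n ?(ltnW p_gt1) //.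
  exact: ltnW (ltn_pmod s k_gt0).
have orbit_le1 j : (j < r)%N -> abs (iter j f x + h - 1) <= 1.
  by move=> _; rewrite -iterD disc_orbit_recentre_le1.
have step_lt : p%:R ^+ r * abs (y - x) < 1.
  by apply: lt_le_trans pr_eps_le1; rewrite ltr_pM2l.
have := iter_Qlam_sub_le_p orbit_le1 (ltW step_lt).
have s_eq : (r + q * k = s)%N by rewrite addnC -divn_eq.
have sk_eq : (r + q.+1 * k = s + k)%N by rewrite mulSn addnCA s_eq addnC.
rewrite -!iterD s_eq sk_eq absB => /le_lt_trans; exact.
Qed.

Section Unbounded.
Hypothesis M_unbounded : forall N, exists i0, forall i, (i0 <= i)%N -> (N <= M i)%N.

Lemma disc_no_approx_period x y d n0 : abs (x - z0) <= S -> abs (y - z0) <= S ->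
  (0 < d)%N -> ~ (forall s, (n0 <= s)%N -> abs (iter s f x - iter (s + d) f y) < 1).
Proof.
move=> x_near y_near d_gt0 approx.
apply: (block_itinerary_no_approx_period m_gt0 M_unbounded itin d_gt0 (n0 := n0)) => s le_s.
apply: (@abs_sub_lt_trans _ (iter s f x)).
  by rewrite absB (le_lt_trans (orbit_shadow x_near s)).
apply: (@abs_sub_lt_trans _ (iter (s + d) f y)); first exact: approx.
exact: le_lt_trans (orbit_shadow y_near _) S_lt1.
Qed.

Lemma disc_wandering : wandering f (fun z => abs (z - z0) <= S).
Proof.
have no_collision n d x y : abs (x - z0) <= S -> abs (y - z0) <= S -> (0 < d)%N ->
    iter n f x = iter (n + d) f y -> False.
  move=> x_near y_near d_gt0 coll; apply: (disc_no_approx_period x_near y_near d_gt0 (n0 := n)).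
  move=> s le_ns; have -> : iter s f x = iter (s + d) f y.
    by rewrite -(subnK le_ns) iterD coll -iterD addnA.
  by rewrite subrr abs0.
move=> n n' [x [y [x_near [y_near coll]]]].
case: (ltngtP n n') => [lt_nn'|lt_n'n|//]; exfalso.
  have := no_collision n (n' - n)%N x y x_near y_near.
  by rewrite subn_gt0 subnKC ?(ltnW lt_nn') // => /(_ lt_nn' coll).
have := no_collision n' (n - n')%N y x y_near x_near.
by rewrite subn_gt0 subnKC ?(ltnW lt_n'n) // => /(_ lt_n'n (esym coll)).
Qed.

Lemma disc_not_attracted : not_attracted abs rhat f (fun z => abs (z - z0) <= S).
Proof.
move=> [w [k [c0 [s [[k_gt0 _] [_ [in_basin [z [z_near z_c0]]]]]]]]].
have [_ [j [_ conv]]] := in_basin z z_c0.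
have [n0 approx] := basin_approx_period z_near k_gt0 conv.
exact: (disc_no_approx_period z_near z_near k_gt0 approx).
Qed.

End Unbounded.
End Itinerary.
End Orbits.
End Map.
End PowerSeries.
End Ultrametric.

Unset Implicit Arguments.
Theorem lemma3p10 (p : nat) (R : realType) (K : closedFieldType) (abs : K -> R)
  (p_prime : prime p) (HCp : is_Cp p abs)
  (rhat : R) (Hrhat : exists w : K, w != 0 /\ abs w = rhat) (Hrhat1 : 1 < rhat)
  (a : nat -> K) (Qf : K -> K)
  (HQ : forall z, abs z <= rhat -> cvgK abs (psum a z) (Qf z))
  (HQnorm : exists c : R, c < rho R p /\ forall i, abs (a i) * rhat ^+ i <= c)
  (m M : nat -> nat) (Hm : forall i, (0 < m i)%N) (HM : forall i, (0 < M i)%N)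
  (Hprod : forall i, (\prod_(1 <= j < m i) rho_seq R p j) * (p%:R) ^+ (M i) <= 1)
  (lam0 : K) (Hlam0 : abs (lam0 - 1) < 1)
  (h0 : K) (Hh0 : abs (h0 - 1) <= abs (Qf 1) / p%:R)
  (Hh0fix : Plam p lam0 h0 + Qf h0 = h0)
  (z0 : K) (Hz0 : filledK abs rhat (Qlam p lam0 h0 Qf) z0)
  (Hitin : has_block_itinerary abs (Qlam p lam0 h0 Qf) m M z0) :
  (forall z, abs (z - z0) <= Sconst R p -> filledK abs rhat (Qlam p lam0 h0 Qf) z) /\
  ((forall N : nat, exists i0 : nat, forall i, (i0 <= i)%N -> (N <= M i)%N) ->
     wandering (Qlam p lam0 h0 Qf) (fun z => abs (z - z0) <= Sconst R p) /\
     (forall z, abs (z - z0) <= Sconst R p -> filledK abs rhat (Qlam p lam0 h0 Qf) z) /\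
     not_attracted abs rhat (Qlam p lam0 h0 Qf) (fun z => abs (z - z0) <= Sconst R p)).
Proof.
have [c [c_lt_rho coef_le]] := HQnorm.
have rhat_ge1 : 1 <= rhat := ltW Hrhat1.
have h0_near1 := abs_sub1_lt1 HCp rhat_ge1 HQ coef_le c_lt_rho p_prime Hh0.
have filled := disc_filled HCp rhat_ge1 HQ coef_le c_lt_rho p_prime Hlam0 h0_near1
  Hm HM Hprod Hitin Hz0.
split=> // M_unbounded; split; last split=> //.
  exact: (disc_wandering HCp rhat_ge1 HQ coef_le c_lt_rho p_prime Hlam0 h0_near1
    Hm HM Hprod Hitin M_unbounded).
exact: (disc_not_attracted HCp rhat_ge1 HQ coef_le c_lt_rho p_prime Hlam0 h0_near1
  Hm HM Hprod Hitin M_unbounded).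
Qed.
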